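(* Let $\lambda\in\overline{\mathrm{Pr}}_k$ and $\mu\in W\cdot\lambda$. Then $\mu\in\overline{\mathrm{Pr}}_k$ if and only if $\mu=w^{-1}\cdot\lambda$ for some $w\in W^\lambda$, where $W^\lambda=\{w\in W:\Delta_+\cap w(\Delta_-)\subset\Delta_+\setminus\Delta(\lambda)\}$ and $\Delta(\lambda)=\{\alpha\in\Delta:\langle\lambda+\rho,\alpha^\vee\rangle\in\mathbb Z\}$.
   Context: Let $\mathfrak g=\mathfrak{sl}_{n+1}(\mathbb C)$, $n\ge1$, $\mathfrak h$ the traceless diagonal matrices, $\Delta=\{\varepsilon_i-\varepsilon_j:i\neq j\}$, $\Delta_+=\{\varepsilon_i-\varepsilon_j:i<j\}$, $\Delta_-=-\Delta_+$, $\alpha_i=\varepsilon_i-\varepsilon_{i+1}$; $(\cdot,\cdot)$ the invariant form on $\mathfrak h^*$ with $(\alpha,\alpha)=2$ for roots, $\langle\mu,\alpha^\vee\rangle=(\mu,\alpha)$; $\omega_i$ fundamental weights, $P^\vee=\bigoplus\mathbb Z\omega_i$, $\rho=\sum\omega_i$; $W$ the Weyl group, $w\cdot\mu=w(\mu+\rho)-\rho$. Fix $k\in\mathbb Q$ with $k+n+1=p/q$, $p,q\in\mathbb N$ coprime, $p\ge n+1$. $\overline{\mathrm{Pr}}_{k,\mathbb Z}=\{\sum\lambda_i\omega_i:\lambda_i\in\mathbb N_0,\sum\lambda_i\le p-n-1\}$. For $w\in W,\eta\in P^\vee$, $C(w,\eta)$ means: for all $\alpha\in\Delta_+$, $0\le(\eta,\alpha)\le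 q-1$ if $w(\alpha)\in\Delta_+$ and $1\le(\eta,\alpha)\le q$ if $w(\alpha)\in\Delta_-$. The admissible weights of level $k$: $\overline{\mathrm{Pr}}_k=\{w\cdot(\mu-\tfrac pq\eta):\mu\in\overline{\mathrm{Pr}}_{k,\mathbb Z},w\in W,\eta\in P^\vee,C(w,\eta)\}$. *)

(* Weights of sl_{n+1} are encoded by their epsilon-coordinates:
   a weight mu in h^* is the traceless vector (mu_0,...,mu_n) in Q^{n+1},
   mu = sum_i mu_i eps_i, so that (mu, eps_i - eps_j) = mu_i - mu_j.
   The Weyl group is the symmetric group 'S_(n+1) permuting the eps_i. *)
From HB Require Import structures.
From mathcomp Require Import all_boot all_order all_algebra.
From mathcomp Require Import fingroup perm.
Set Implicit Arguments. Unset Strict Implicit. Unset Printing Implicit Defensive.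
Import Order.TTheory GRing.Theory Num.Theory.
Local Open Scope ring_scope.




Notation wt n := {ffun 'I_n.+1 -> rat}.

Definition traceless {n : nat} (x : wt n) : Prop := \sum_(i < n.+1) x i = 0.

(* (mu, eps_i - eps_j) = <mu, (eps_i - eps_j)^vee> *)
Definition pairing {n : nat} (x : wt n) (i j : 'I_n.+1) : rat := x i - x j.

(* roots eps_i - eps_j (i <> j) are encoded by ordered pairs (i,j) *)
Definition is_root {n : nat} (a : 'I_n.+1 * 'I_n.+1) : bool := a.1 != a.2.
Definition pos_root {n : nat} (a : 'I_n.+1 * 'I_n.+1) : bool := (a.1 < a.2)%N.
Definition neg_root {n : nat} (a : 'I_n.+1 * 'I_n.+1) : bool := (a.2 < a.1)%N.

(* rho = sum of fundamental weights: rho_i = n/2 - i *)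
Definition rho (n : nat) : wt n := [ffun i : 'I_n.+1 => (n%:R / 2%:R) - (i : nat)%:R].

(* w(eps_j) = eps_(w j) *)
Definition wact {n : nat} (w : {perm 'I_n.+1}) (x : wt n) : wt n := [ffun i => x ((w^-1)%g i)].
Definition root_act {n : nat} (w : {perm 'I_n.+1}) (a : 'I_n.+1 * 'I_n.+1) :=
  (w a.1, w a.2).

Definition dot {n : nat} (w : {perm 'I_n.+1}) (x : wt n) : wt n := wact w (x + rho n) - rho n.

(* P^vee = sum Z omega_i : traceless, integral pairing with simple coroots *)
Definition in_Pvee {n : nat} (x : wt n) : Prop :=
  traceless x /\ forall i : 'I_n, pairing x (widen_ord (leqnSn n) i) (lift ord0 i) \is a Num.int.

(* bar Pr_{k,Z} with k + n + 1 = p/q *)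
Definition PrZ {n : nat} (p : nat) (x : wt n) : Prop :=
  traceless x /\
  (forall i : 'I_n, pairing x (widen_ord (leqnSn n) i) (lift ord0 i) \is a Num.nat) /\
  \sum_(i < n) pairing x (widen_ord (leqnSn n) i) (lift ord0 i) <= (p%:R - n%:R - 1).

Definition Ccond {n : nat} (q : nat) (w : {perm 'I_n.+1}) (eta : wt n) : Prop :=
  forall a, pos_root a ->
    (pos_root (root_act w a) -> 0 <= pairing eta a.1 a.2 <= q%:R - 1) /\
    (neg_root (root_act w a) -> 1 <= pairing eta a.1 a.2 <= q%:R).

Definition Pr {n : nat} (p q : nat) (lam : wt n) : Prop :=
  exists (mu : wt n) (w : {perm 'I_n.+1}) (eta : wt n),
    [/\ PrZ p mu, in_Pvee eta, Ccond q w eta &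
        lam = dot w [ffun i => mu i - (p%:R / q%:R) * eta i]].

Definition Delta_int {n : nat} (lam : wt n) (a : 'I_n.+1 * 'I_n.+1) : Prop :=
  is_root a /\ pairing (lam + rho n) a.1 a.2 \is a Num.int.

Definition Wlam {n : nat} (lam : wt n) (w : {perm 'I_n.+1}) : Prop :=
  forall a, pos_root a -> (exists2 b, neg_root b & root_act w b = a) ->
    pos_root a /\ ~ Delta_int lam a.

From HB Require Import structures.
From mathcomp Require Import all_boot all_order all_algebra.
From mathcomp Require Import fingroup perm.
From mathcomp Require Import zify ring lra.
Set Implicit Arguments. Unset Strict Implicit. Unset Printing Implicit Defensive.
Import Order.TTheory GRing.Theory Num.Theory.
Local Open Scope ring_scope.

(* Write an admissible weight as lam = w0 . (mu0 - (p/q) eta) with mu0 in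
   Pr_{k,Z}, eta in P^vee and C(w0, eta).  For a positive root alpha put
   E = (eta, alpha), an integer in [0, q]; then
     (lam + rho, w0 alpha) = (mu0 + rho, alpha) - (p/q) E,
   where (mu0 + rho, alpha) is an integer in ]0, p[.  Since p and q are coprime,
   w0 alpha is integral for lam iff E is 0 or q, and C(w0, eta) decides which
   endpoint occurs, in such a way that lam + rho is positive on every positive
   integral root (Pr_dominant).  Hence if s . lam is admissible, s^-1 cannot send
   a positive integral root of lam to a negative root, i.e. s^-1 is in W^lam.
   Conversely, for w in W^lam the triple (mu0, w0 w^-1, eta) presents w^-1 . lam:
   C(w0 w^-1, eta) only changes on roots flipped by w^-1, which are not integral,
   so there E lies strictly between 0 and q (Ccond_twist). *)

Lemma int_interior (E : rat) (q : nat) : E \is a Num.int ->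
  0 <= E <= q%:R -> E != 0 -> E != q%:R -> 1 <= E <= q%:R - 1.
Proof.
move=> /intrP[e ->].
rewrite -[q%:R]/(q%:Z%:~R : rat) -[0 : rat]/((0 : int)%:~R) -[1 : rat]/((1 : int)%:~R).
rewrite -rmorphB !ler_int !eqr_int; lia.
Qed.

Lemma ltn_swap (a b : nat) : a != b -> (b < a)%N = ~~ (a < b)%N.
Proof. by move=> ab; rewrite ltnNge leq_eqVlt negb_or ab. Qed.

Lemma sum_nat_sub_le (R : numDomainType) (F : nat -> R) (i j n : nat) :
  (i <= j <= n)%N -> (forall m, (m < n)%N -> 0 <= F m) ->
  \sum_(i <= m < j) F m <= \sum_(0 <= m < n) F m.
Proof.
move=> /andP[ij jn] F0.
have nonneg a b : (b <= n)%N -> 0 <= \sum_(a <= m < b) F m.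
  move=> bn; rewrite big_nat_cond; apply: sumr_ge0 => m /andP[/andP[_ mb] _].
  exact/F0/(leq_trans mb).
rewrite (@big_cat_nat _ _ _ i 0 n) ?(leq_trans ij) //.
rewrite (@big_cat_nat _ _ _ j i n) //= addrA.
rewrite -[X in X <= _]add0r -[X in X <= _]addr0.
apply: lerD; [apply: lerD => //; exact: nonneg (leq_trans ij jn) | exact: nonneg].
Qed.

(* if E and (p/q) E are integers with p, q coprime then q divides E;
   inside [0, q] only the endpoints remain *)
Lemma coprime_int_endpoints (p q : nat) (E : rat) : (0 < q)%N -> coprime p q ->
  E \is a Num.int -> p%:R / q%:R * E \is a Num.int -> 0 <= E <= q%:R ->
  E = 0 \/ E = q%:R.
Proof.
move=> q0 cpq /intrP[e ->] /intrP[z pez].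
have qn0 : (q%:R : rat) != 0 by rewrite pnatr_eq0 -lt0n.
have /intr_inj pe : ((p%:Z * e)%:~R : rat) = (q%:Z * z)%:~R.
  by rewrite !intrM -pez !pmulrn; field.
have /dvdzP[k ek] : (q%:Z %| e)%Z.
  rewrite -(@Gauss_dvdzr _ p%:Z); last by rewrite coprimezE /= coprime_sym.
  by rewrite pe dvdz_mulr.
rewrite -[q%:R]/(q%:Z%:~R : rat) -[0 : rat]/((0 : int)%:~R) !ler_int ek.
move=> /andP[lo hi].
have [k0|k1] : k = 0 \/ k = 1.
  have qz0 : 0 < q%:Z by rewrite ltz_nat.
  have : 0 <= k by rewrite -(pmulr_lge0 _ qz0).
  have : k <= 1 by rewrite -(ler_pM2r qz0) mul1r.
  lia.
- by left; rewrite k0 mul0r.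
- by right; rewrite k1 mul1r.
Qed.

Section Weights.
Variable n : nat.
Implicit Types (x y : wt n) (i j k l : 'I_n.+1) (s w : {perm 'I_n.+1}).

Lemma pairingN x i j : pairing x j i = - pairing x i j.
Proof. by rewrite /pairing opprB. Qed.

Lemma pairingD x y i j : pairing (x + y) i j = pairing x i j + pairing y i j.
Proof. rewrite /pairing !ffunE; ring. Qed.

Lemma pairing_rho i j : pairing (rho n) i j = (j : nat)%:R - (i : nat)%:R.
Proof. rewrite /pairing !ffunE; ring. Qed.

Definition simple_pairing x (m : nat) : rat := x (inord m) - x (inord m.+1).

Lemma simple_pairingE x (m : 'I_n) :
  pairing x (widen_ord (leqnSn n) m) (lift ord0 m) = simple_pairing x m.
Proof.
rewrite /pairing /simple_pairing; congr (x _ - x _); apply: val_inj => /=.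
  by rewrite inordK // ltnS ltnW.
by rewrite inordK // ltnS.
Qed.

Lemma pairing_simple_sum x i j : (i <= j)%N ->
  pairing x i j = \sum_(i <= m < j) simple_pairing x m.
Proof.
move=> ij; have := telescope_sumr (fun m => x (inord m)) ij.
rewrite !inord_val /pairing /simple_pairing => tele.
by rewrite -opprB -tele -sumrN; apply: eq_bigr => m _; rewrite opprB.
Qed.

Lemma pairing_int_simple x :
  (forall m, (m < n)%N -> simple_pairing x m \is a Num.int) ->
  forall i j, pairing x i j \is a Num.int.
Proof.
move=> xint.
suff int_le i j : (i <= j)%N -> pairing x i j \is a Num.int.
  by move=> i j; case: (leqP i j) => [/int_le//|/ltnW/int_le]; rewrite pairingN rpredN.
move=> ij; rewrite pairing_simple_sum // big_nat_cond.
apply: rpred_sum => m /andP[/andP[_ mj] _]; apply: xint.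
by apply: leq_trans mj _; rewrite -ltnS.
Qed.

Lemma Pvee_int eta : in_Pvee eta -> forall i j, pairing eta i j \is a Num.int.
Proof.
case=> _ eint; apply: pairing_int_simple => m mn.
by rewrite -[m]/(val (Ordinal mn)) -simple_pairingE.
Qed.

Lemma PrZ_simple_nat p mu m : PrZ p mu -> (m < n)%N -> simple_pairing mu m \is a Num.nat.
Proof. by case=> _ [mnat _] mn; rewrite -[m]/(val (Ordinal mn)) -simple_pairingE. Qed.

Lemma PrZ_int p mu : PrZ p mu -> forall i j, pairing (mu + rho n) i j \is a Num.int.
Proof.
move=> muZ; apply: pairing_int_simple => m mn.
have -> : simple_pairing (mu + rho n) m = simple_pairing mu m + 1.
  rewrite /simple_pairing !ffunE !inordK ?ltnS ?(ltnW mn) // -natr1; ring.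
by rewrite rpredD ?rpred1 // intrE (PrZ_simple_nat muZ mn).
Qed.

Lemma PrZ_bounds p mu i j : PrZ p mu -> (i < j)%N ->
  0 < pairing (mu + rho n) i j < p%:R.
Proof.
move=> muZ ij; have [_ [_ sum_le]] := muZ.
have jn : (j <= n)%N by rewrite -ltnS.
have simple_ge0 m : (m < n)%N -> 0 <= simple_pairing mu m.
  by move=> mn; rewrite natr_ge0 ?(PrZ_simple_nat muZ).
have diff_ge0 : 0 <= pairing mu i j.
  rewrite pairing_simple_sum ?(ltnW ij) // big_nat_cond.
  apply: sumr_ge0 => m /andP[/andP[_ mj] _]; exact/simple_ge0/(leq_trans mj).
have diff_le : pairing mu i j <= p%:R - n%:R - 1.
  apply: le_trans sum_le; rewrite pairing_simple_sum ?(ltnW ij) //.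
  under [X in _ <= X]eq_bigr => m _ do rewrite simple_pairingE.
  rewrite -(big_mkord xpredT (simple_pairing mu)).
  by apply: sum_nat_sub_le; rewrite ?(ltnW ij).
rewrite pairingD pairing_rho -natrB ?(ltnW ij) //.
have : (1 <= j - i <= n)%N by lia.
rewrite -(ler_nat rat) -[(j - i <= n)%N](ler_nat rat) => /andP[lo hi].
apply/andP; split; lra.
Qed.

Lemma dot_rho s x k : (dot s x + rho n) k = (x + rho n) ((s^-1)%g k).
Proof. by rewrite /dot subrK /wact ffunE. Qed.

Lemma pairing_dot s x k l :
  pairing (dot s x + rho n) k l = pairing (x + rho n) ((s^-1)%g k) ((s^-1)%g l).
Proof. by rewrite /pairing !dot_rho. Qed.

Lemma dotM s w x : dot s (dot w x) = dot (w * s)%g x.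
Proof.
rewrite {1}/dot /dot subrK; congr (_ - _); apply/ffunP => i.
by rewrite !ffunE invMg permM.
Qed.

Lemma pairing_shift (mu eta : wt n) (c : rat) i j :
  pairing ([ffun k => mu k - c * eta k] + rho n) i j
  = pairing (mu + rho n) i j - c * pairing eta i j.
Proof. rewrite /pairing !ffunE; ring. Qed.

Lemma Wlam_flip lam w k l : Wlam lam w -> k != l ->
  (k < l)%N != ((w^-1)%g k < (w^-1)%g l)%N ->
  pairing (lam + rho n) k l \notin Num.int.
Proof.
move=> lamw neq_kl flip.
have neq_wkl : (w^-1)%g k != (w^-1)%g l by rewrite (inj_eq perm_inj).
have flipped (a b : 'I_n.+1) : (a < b)%N -> ((w^-1)%g b < (w^-1)%g a)%N ->
    pairing (lam + rho n) a b \notin Num.int.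
  move=> ab wba; apply/negP => ab_int.
  have [|_ not_int] := lamw (a, b) ab.
    by exists ((w^-1)%g a, (w^-1)%g b); rewrite // /root_act /= !permKV.
  by apply: not_int; split; rewrite // /is_root -(inj_eq val_inj) /= ltn_eqF.
case: (ltngtP k l) flip => [kl|lk|/val_inj eq_kl]; rewrite ?eq_kl ?eqxx // in neq_kl.
- by rewrite /= -ltn_swap // => /(flipped _ _ kl).
- by rewrite /= negbK pairingN rpredN => /(flipped _ _ lk).
Qed.

End Weights.

Section Admissible.
Variables (n p q : nat) (mu0 eta : wt n) (w0 : {perm 'I_n.+1}).
Hypotheses (q_gt0 : (0 < q)%N) (coprime_pq : coprime p q).
Hypotheses (mu0Z : PrZ p mu0) (etaP : in_Pvee eta) (w0eta : Ccond q w0 eta).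
Implicit Types (i j : 'I_n.+1) (w : {perm 'I_n.+1}).

Local Notation lam := (dot w0 [ffun k => mu0 k - p%:R / q%:R * eta k]).

Lemma lam_pairing i j : pairing (lam + rho n) (w0 i) (w0 j)
  = pairing (mu0 + rho n) i j - p%:R / q%:R * pairing eta i j.
Proof. by rewrite pairing_dot !permK pairing_shift. Qed.

Lemma Ccond_bounds i j : (i < j)%N -> 0 <= pairing eta i j <= q%:R.
Proof.
move=> ij; have [pos neg] := @w0eta (i, j) ij; rewrite /pos_root /neg_root /= in pos neg.
case: (ltngtP (w0 i) (w0 j)) => [/pos|/neg|/val_inj/perm_inj eq_ij].
- by case/andP=> lo hi; rewrite lo /=; lra.
- by case/andP=> lo hi; rewrite hi andbT; lra.
- by move: ij; rewrite eq_ij ltnn.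
Qed.

Lemma lam_int_endpoints i j : (i < j)%N ->
  pairing (lam + rho n) (w0 i) (w0 j) \is a Num.int <->
  pairing eta i j = 0 \/ pairing eta i j = q%:R.
Proof.
move=> ij; have mu0int := PrZ_int mu0Z i j.
have qn0 : (q%:R : rat) != 0 by rewrite pnatr_eq0 -lt0n.
rewrite lam_pairing; split=> [lam_int|[->|->]].
- apply: (@coprime_int_endpoints p q) => //.
  + exact: (Pvee_int etaP i j).
  + by rewrite -[X in X \is a _](subKr (pairing (mu0 + rho n) i j)) rpredB.
  + exact: Ccond_bounds.
- by rewrite mulr0 subr0.
- by rewrite divfK // rpredB // natr_int.
Qed.

Lemma lam_int_sign i j : (i < j)%N ->
  pairing (lam + rho n) (w0 i) (w0 j) \is a Num.int ->
  ((w0 i < w0 j)%N -> 0 < pairing (lam + rho n) (w0 i) (w0 j)) /\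
  ((w0 j < w0 i)%N -> pairing (lam + rho n) (w0 i) (w0 j) < 0).
Proof.
move=> ij /(lam_int_endpoints ij) endpoint.
have [pos neg] := @w0eta (i, j) ij; rewrite /pos_root /neg_root /= in pos neg.
have /andP[mu0_gt0 mu0_ltp] := PrZ_bounds mu0Z ij.
have qn0 : (q%:R : rat) != 0 by rewrite pnatr_eq0 -lt0n.
rewrite lam_pairing; split=> [/pos|/neg] /andP[lo hi]; case: endpoint => E.
- by rewrite E mulr0 subr0.
- by move: hi; rewrite E; lra.
- by move: lo; rewrite E; lra.
- by rewrite E divfK //; lra.
Qed.

(* for w in W^lam, the twisted Weyl element w0 w^-1 still satisfies C(_, eta):
   on roots whose sign w^-1 flips, (eta, alpha) avoids the endpoints 0 and q *)
Lemma Ccond_twist w : Wlam lam w -> Ccond q (w0 * w^-1)%g eta.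
Proof.
move=> lamw [i j] ij; rewrite /pos_root /neg_root /root_act /= !permM.
have [pos neg] := @w0eta (i, j) ij; rewrite /pos_root /neg_root /= in pos neg.
have neq_ij : w0 i != w0 j by rewrite (inj_eq perm_inj) -(inj_eq val_inj) ltn_eqF.
have neq_wij : (w^-1)%g (w0 i) != (w^-1)%g (w0 j) by rewrite (inj_eq perm_inj).
have [/eqP same | flip] := boolP ((w0 i < w0 j)%N == ((w^-1)%g (w0 i) < (w^-1)%g (w0 j))%N).
  split=> [|wji]; first by rewrite -same; exact: pos.
  by apply: neg; rewrite (ltn_swap neq_ij) same -(ltn_swap neq_wij).
have /andP[lo hi] : 1 <= pairing eta i j <= q%:R - 1.
  apply: int_interior; [exact: (Pvee_int etaP i j) | exact: Ccond_bounds | |];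
  apply/eqP => endpoint; apply: (negP (Wlam_flip lamw neq_ij flip));
  apply/(lam_int_endpoints ij); by [left | right].
by split=> _; apply/andP; split; lra.
Qed.

End Admissible.

Section AdmissibleOrbit.
Variables (n p q : nat).
Hypotheses (q_gt0 : (0 < q)%N) (coprime_pq : coprime p q).
Implicit Types (lam : wt n) (k l : 'I_n.+1) (s w : {perm 'I_n.+1}).

Lemma Pr_dominant lam k l : Pr p q lam -> (k < l)%N ->
  pairing (lam + rho n) k l \is a Num.int -> 0 < pairing (lam + rho n) k l.
Proof.
move=> [mu0 [w0 [eta [mu0Z etaP w0eta ->]]]].
have [i ->] : exists i, k = w0 i by exists ((w0^-1)%g k); rewrite permKV.
have [j ->] : exists j, l = w0 j by exists ((w0^-1)%g l); rewrite permKV.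
have sign := lam_int_sign q_gt0 coprime_pq mu0Z etaP w0eta.
move=> kl; case: (ltngtP i j) => [ij|ji|/val_inj eq_ij] lam_int.
- exact: (sign _ _ ij lam_int).1.
- rewrite pairingN oppr_gt0; apply: (sign _ _ ji _).2 kl.
  by rewrite pairingN rpredN.
- by rewrite eq_ij ltnn in kl.
Qed.

(* if s . lam is admissible too, then s^-1 lies in W^lam: a positive integral
   root sent to a negative one would violate dominance of s . lam *)
Lemma Pr_dot_Wlam lam s : Pr p q lam -> Pr p q (dot s lam) -> Wlam lam (s^-1)%g.
Proof.
move=> lamP slamP [a1 a2] a12 [[b1 b2] b21]; rewrite /root_act /= => -[e1 e2].
split=> // -[_ a_int].
have b_pairing : pairing (dot s lam + rho n) b2 b1 = - pairing (lam + rho n) a1 a2.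
  by rewrite pairing_dot e1 e2 pairingN.
have := Pr_dominant lamP a12 a_int.
have := Pr_dominant slamP b21; rewrite b_pairing rpredN => /(_ a_int).
lra.
Qed.

Lemma Wlam_dot_Pr lam w : Pr p q lam -> Wlam lam w -> Pr p q (dot (w^-1)%g lam).
Proof.
move=> [mu0 [w0 [eta [mu0Z etaP w0eta ->]]]] lamw.
exists mu0, (w0 * w^-1)%g, eta; split=> //; last by rewrite dotM.
exact: (Ccond_twist q_gt0 coprime_pq mu0Z etaP w0eta lamw).
Qed.

End AdmissibleOrbit.

Theorem mainTheorem7 (n p q : nat) (lam mu : wt n) :
  (1 <= n)%N -> (0 < q)%N -> coprime p q -> (n.+1 <= p)%N ->
  Pr p q lam ->
  (exists w : {perm 'I_n.+1}, mu = dot w lam) ->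
  (Pr p q mu <-> exists2 w : {perm 'I_n.+1}, Wlam lam w & mu = dot (w^-1)%g lam).
Proof.
move=> _ q_gt0 coprime_pq _ lamP [s ->]; split=> [slamP | [w lamw ->]].
- by exists (s^-1)%g; [exact: (Pr_dot_Wlam q_gt0 coprime_pq lamP slamP) | rewrite invgK].
- exact: (Wlam_dot_Pr q_gt0 coprime_pq lamP lamw).
Qed.
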